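(* Let $C$ be a convex set in the plane of diameter $d$, and let $pq$ be a straight-line segment that intersects $C$. Then for every point $r\in C$, $\min\{|rp|,|rq|\}\le \sqrt{d^2+|pq|^2/4}$.
   Context: $|xy|$ denotes the Euclidean distance between points $x$ and $y$. *)

From Stdlib Require Import Reals.
Open Scope R_scope.

Definition point : Type := (R * R)%type.

Definition pdist (x y : point) : R :=
  sqrt ((fst x - fst y) ^ 2 + (snd x - snd y) ^ 2).

Definition lerp (x y : point) (t : R) : point :=
  ((1 - t) * fst x + t * fst y, (1 - t) * snd x + t * snd y).

Definition convex (C : point -> Prop) : Prop :=
  forall x y t, C x -> C y -> 0 <= t <= 1 -> C (lerp x y t).

Definition is_diameter (C : point -> Prop) (d : R) : Prop :=
  (forall x y, C x -> C y -> pdist x y <= d) /\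
  (forall e, (forall x y, C x -> C y -> pdist x y <= e) -> d <= e).

Definition segment_meets (p q : point) (C : point -> Prop) : Prop :=
  exists t, 0 <= t <= 1 /\ C (lerp p q t).

(* Let s = (1-t)p + tq be a point of the segment pq lying in C.  Stewart's
   identity  (1-t)|rp|^2 + t|rq|^2 = |rs|^2 + t(1-t)|pq|^2  bounds a convex
   combination of |rp|^2 and |rq|^2, hence their minimum, by d^2 + |pq|^2/4,
   since |rs| <= d and t(1-t) <= 1/4. *)

From Stdlib Require Import Reals Psatz.
Open Scope R_scope.

Lemma pdist_sq (x y : point) :
  pdist x y ^ 2 = (fst x - fst y) ^ 2 + (snd x - snd y) ^ 2.
Proof.
  apply pow2_sqrt, Rplus_le_le_0_compat; apply pow2_ge_0.
Qed.

Lemma pdist_lerp_stewart (r p q : point) (t : R) :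
  (1 - t) * pdist r p ^ 2 + t * pdist r q ^ 2 =
  pdist r (lerp p q t) ^ 2 + t * (1 - t) * pdist p q ^ 2.
Proof.
  rewrite !pdist_sq; unfold lerp; simpl; ring.
Qed.

Lemma mul_one_minus_le_quarter (t : R) : t * (1 - t) <= 1 / 4.
Proof.
  pose proof (pow2_ge_0 (t - 1 / 2)); nra.
Qed.

Lemma Rmin_sq_le_convex_comb (x y t : R) :
  0 <= x -> 0 <= y -> 0 <= t <= 1 ->
  Rmin x y ^ 2 <= (1 - t) * x ^ 2 + t * y ^ 2.
Proof.
  intros Hx Hy Ht.
  assert (Hm : 0 <= Rmin x y) by (apply Rmin_glb; assumption).
  assert (Hmx : Rmin x y ^ 2 <= x ^ 2) by (apply pow_incr; split; [exact Hm | apply Rmin_l]).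
  assert (Hmy : Rmin x y ^ 2 <= y ^ 2) by (apply pow_incr; split; [exact Hm | apply Rmin_r]).
  nra.
Qed.

Lemma le_sqrt_of_sq_le (x z : R) : 0 <= x -> x ^ 2 <= z -> x <= sqrt z.
Proof.
  intros Hx Hxz.
  rewrite <- (sqrt_pow2 x Hx).
  now apply sqrt_le_1_alt.
Qed.

Theorem lemma1 (C : point -> Prop) (d : R) (p q : point) :
  convex C -> is_diameter C d -> segment_meets p q C ->
  forall r, C r ->
    Rmin (pdist r p) (pdist r q) <= sqrt (d ^ 2 + (pdist p q) ^ 2 / 4).
Proof.
  intros _ [Hdiam _] [t [Ht Hs]] r Hr.
  assert (Hrs : pdist r (lerp p q t) ^ 2 <= d ^ 2).
  { apply pow_incr; split; [apply sqrt_pos | exact (Hdiam _ _ Hr Hs)]. }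
  pose proof (mul_one_minus_le_quarter t) as Hquarter.
  pose proof (pow2_ge_0 (pdist p q)) as Hpq.
  apply le_sqrt_of_sq_le.
  - apply Rmin_glb; apply sqrt_pos.
  - eapply Rle_trans.
    + apply Rmin_sq_le_convex_comb; [apply sqrt_pos | apply sqrt_pos | exact Ht].
    + rewrite pdist_lerp_stewart; nra.
Qed.
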